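(* Let $d=e_1+\varepsilon\gamma$ with $\gamma\in\Gamma$ and $\varepsilon\ge0$ sufficiently small, with orientations chosen so that $Vd\ge0$. Write $I^*(d)=\{0\}\cup I_1\cup I_2$ with $I_1\subseteq\{1,\dots,m\}$, $I_2\subseteq\{m+1,\dots,2m\}$. Then $g^*(d)=A_{I^*(d)}d$, where $$A_{I^*(d)}=\frac1nJ+\begin{bmatrix}V_{I_1}^T & V_{I_2}^T\end{bmatrix}\left(\begin{bmatrix}V_{I_1}\\ V_{I_2}\end{bmatrix}\begin{bmatrix}V_{I_1}^T & V_{I_2}^T\end{bmatrix}\right)^{+}\begin{bmatrix}(1-\lambda)V_{I_1}\\(1+\lambda)V_{I_2}\end{bmatrix}\in\mathbb R^{n\times n}.$$
   Context: $\mathcal G$ is a simple connected oriented graph with $n$ nodes, $m$ edges, incidence matrix $C$ and PTDF matrix $V=C(C^TC)^+$ ($^+$ = Moore–Penrose pseudoinverse); $e$ is the all-ones vector, $J=ee^T$, $e_1$ the first unit vector, $\lambda\in(0,1)$. $g^*(d)$ is the unique minimizer of $\frac12\sum_ig_i^2$ over $g\in\mathbb R^n_{\ge0}$ with $e^Tg=e^Td$ and $-\lambda|Vd|\le V(d-g)\le\lambda|Vd|$; when $Vd\ge0$ the feasible set is $\mathcal F_d=\{g\ge0:e^Tg=e^Td,(1-\lambda)Vd\le Vg\le(1+\lambda)Vd\}$. $\Gamma=\{\gamma\in\mathbb R^n:\gamma_1=0,\gamma\ge0,e^T\gamma=1\}$. Hyperplanes: $H_0=\{g:e^Tg=e^Td\}$,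 $H_i=\{g:(Vg)_i=(1-\lambda)(Vd)_i\}$, $H_{m+i}=\{g:(Vg)_i=(1+\lambda)(Vd)_i\}$ ($i=1,\dots,m$), and $I^*(d)=\{j\in\{0,\dots,2m\}:g^*(d)\in H_j\}$. $V_{I_1}$ is the matrix of rows $j\in I_1$ of $V$ and $V_{I_2}$ the matrix of rows $k-m$, $k\in I_2$, of $V$. *)

From HB Require Import structures.
From mathcomp Require Import all_boot all_order all_algebra.
From mathcomp Require Import reals.
From Stdlib Require Import ClassicalEpsilon.
Set Implicit Arguments. Unset Strict Implicit. Unset Printing Implicit Defensive.
Import Order.TTheory GRing.Theory Num.Theory.
Local Open Scope ring_scope.

Section Defs.
Variable R : realType.

(* Moore-Penrose pseudoinverse: the (unique) X satisfying the four Penrose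
   equations (real matrices, so conjugate transpose = transpose). *)
Definition is_pinv (p q : nat) (A : 'M[R]_(p, q)) (X : 'M[R]_(q, p)) : Prop :=
  [/\ A *m X *m A = A, X *m A *m X = X,
      (A *m X)^T = A *m X & (X *m A)^T = X *m A].

Definition pinv (p q : nat) (A : 'M[R]_(p, q)) : 'M[R]_(q, p) :=
  epsilon (inhabits 0) (is_pinv A).

Definition adj (n m : nat) (src dst : 'I_m -> 'I_n) : rel 'I_n :=
  fun u v => [exists e, ((src e == u) && (dst e == v)) ||
                        ((src e == v) && (dst e == u))].

Definition simple_connected_oriented (n m : nat) (src dst : 'I_m -> 'I_n) : Prop :=
  [/\ (forall e, src e != dst e),
      (forall e e', [set src e; dst e] = [set src e'; dst e'] -> e = e')
    & (forall u v, connect (adj src dst) u v)].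

Definition incidence (n m : nat) (src dst : 'I_m -> 'I_n) : 'M[R]_(m, n) :=
  \matrix_(e < m, v < n) ((v == src e)%:R - (v == dst e)%:R).

Definition PTDF (n m : nat) (src dst : 'I_m -> 'I_n) : 'M[R]_(m, n) :=
  let C := incidence src dst in C *m pinv (C^T *m C).

Definition e1 (n : nat) : 'cV[R]_n := \col_(i < n) ((val i == 0%N)%:R).

Definition in_Gamma (n : nat) (gam : 'cV[R]_n) : Prop :=
  [/\ (forall i : 'I_n, val i = 0%N -> gam i 0 = 0),
      (forall i, 0 <= gam i 0) & \sum_i gam i 0 = 1].

Definition feasible (n m : nat) (lam : R) (V : 'M[R]_(m, n)) (d g : 'cV[R]_n) : Prop :=
  [/\ (forall i, 0 <= g i 0), \sum_i g i 0 = \sum_i d i 0 &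
      (forall k, - lam * `|(V *m d) k 0| <= (V *m (d - g)) k 0
                 /\ (V *m (d - g)) k 0 <= lam * `|(V *m d) k 0|)].

Definition is_gstar (n m : nat) (lam : R) (V : 'M[R]_(m, n)) (d g : 'cV[R]_n) : Prop :=
  feasible lam V d g /\
  (forall h, feasible lam V d h ->
     2^-1 * \sum_i (g i 0) ^+ 2 <= 2^-1 * \sum_i (h i 0) ^+ 2).

(* I_1, I_2 (the latter indexed by i with m+i in I^*(d)) *)
Definition I1set (n m : nat) (lam : R) (V : 'M[R]_(m, n)) (d g : 'cV[R]_n) : {set 'I_m} :=
  [set i | (V *m g) i 0 == (1 - lam) * (V *m d) i 0].
Definition I2set (n m : nat) (lam : R) (V : 'M[R]_(m, n)) (d g : 'cV[R]_n) : {set 'I_m} :=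
  [set i | (V *m g) i 0 == (1 + lam) * (V *m d) i 0].

Definition rows_of (n m : nat) (V : 'M[R]_(m, n)) (I : {set 'I_m}) : 'M[R]_(#|I|, n) :=
  \matrix_(k < #|I|) row (enum_val k) V.

Definition Amat (n m : nat) (lam : R) (V : 'M[R]_(m, n)) (I1 I2 : {set 'I_m}) : 'M[R]_n :=
  let W := col_mx (rows_of V I1) (rows_of V I2) in
  let B := col_mx ((1 - lam) *: rows_of V I1) ((1 + lam) *: rows_of V I2) in
  (n%:R)^-1 *: const_mx 1 + W^T *m pinv (W *m W^T) *m B.

End Defs.

From HB Require Import structures.
From mathcomp Require Import all_boot all_order all_algebra.
From mathcomp Require Import reals.
From mathcomp Require Import ring lra.
From Stdlib Require Import ClassicalEpsilon.
Import Order.TTheory GRing.Theory Num.Theory.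
Local Open Scope ring_scope.

(* Once g^*(d) is strictly positive only flow constraints can be active, and
   optimality makes g^*(d) - mean(d) e orthogonal to every direction r with
   e^T r = 0 that leaves the active rows W of V unchanged.  So it lies in the row
   space of W and is recovered from the active values W g^*(d) = B d through the
   projector W^T (W W^T)^+ W; with V e = 0 this is g^*(d) = A_{I^*(d)} d.
   Positivity for small eps comes from the feasible point
   h = (1 - lam) d + lam mean(d) e, whose entries are all at least lam/n:
   optimality gives |g - h|^2 <= 2 <h - g, h>, which is O(eps) by the flow balance
   C^T V = I - J/n at node 1, because the unit injection e_1 sends no flow into
   node 1 (node 1 maximises the potential (C^T C)^+ e_1). *)

Section DotProduct.
Context {R : realType} {p : nat}.
Implicit Types (x y z : 'cV[R]_p).

Definition dotv x y : R := \sum_i x i 0 * y i 0.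

Lemma dotvC x y : dotv x y = dotv y x.
Proof. by apply: eq_bigr => i _; rewrite mulrC. Qed.

Lemma dotvDl x y z : dotv (x + y) z = dotv x z + dotv y z.
Proof. by rewrite -big_split; apply: eq_bigr => i _; rewrite mxE mulrDl. Qed.

Lemma dotvNl x y : dotv (- x) y = - dotv x y.
Proof. by rewrite -sumrN; apply: eq_bigr => i _; rewrite mxE mulNr. Qed.

Lemma dotvBl x y z : dotv (x - y) z = dotv x z - dotv y z.
Proof. by rewrite dotvDl dotvNl. Qed.

Lemma dotvZl a x y : dotv (a *: x) y = a * dotv x y.
Proof. by rewrite mulr_sumr; apply: eq_bigr => i _; rewrite mxE mulrA. Qed.

Lemma dotvBr x y z : dotv x (y - z) = dotv x y - dotv x z.
Proof. by rewrite ![dotv x _]dotvC dotvBl. Qed.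

Lemma dotvZr a x y : dotv x (a *: y) = a * dotv x y.
Proof. by rewrite ![dotv x _]dotvC dotvZl. Qed.

Lemma dotvDr x y z : dotv x (y + z) = dotv x y + dotv x z.
Proof. by rewrite ![dotv x _]dotvC dotvDl. Qed.

Lemma dotv_deltar x a : dotv x (delta_mx a 0) = x a 0.
Proof.
rewrite /dotv (bigD1 a) //= mxE !eqxx mulr1 big1 ?addr0 // => i /negbTE ia.
by rewrite mxE ia mulr0.
Qed.

Lemma dotv0r x : dotv x 0 = 0.
Proof. by rewrite /dotv big1 // => i _; rewrite mxE mulr0. Qed.

Lemma dotv_onesl x : dotv (const_mx 1) x = \sum_i x i 0.
Proof. by apply: eq_bigr => i _; rewrite mxE mul1r. Qed.

Lemma dotv_sqr x : dotv x x = \sum_i x i 0 ^+ 2.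
Proof. by apply: eq_bigr => i _; rewrite expr2. Qed.

Lemma sqr_le_dotv x i : x i 0 ^+ 2 <= dotv x x.
Proof. by rewrite dotv_sqr (bigD1 i) //= lerDl sumr_ge0 // => j _; rewrite sqr_ge0. Qed.

Lemma dotv_ge0 x : 0 <= dotv x x.
Proof. by rewrite dotv_sqr sumr_ge0 // => i _; rewrite sqr_ge0. Qed.

Lemma dotv_eq0 x : dotv x x = 0 -> x = 0.
Proof.
rewrite dotv_sqr => sq0; apply/matrixP => i j; rewrite ord1 mxE.
have /eqP := @psumr_eq0P _ _ xpredT _ (fun k _ => sqr_ge0 (x k 0)) sq0 i isT.
by rewrite sqrf_eq0 => /eqP.
Qed.

End DotProduct.

Lemma dotv_trmx_mull {R : realType} {p q} (A : 'M[R]_(q, p)) (u : 'cV[R]_q) (x : 'cV[R]_p) :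
  dotv (A^T *m u) x = dotv u (A *m x).
Proof.
rewrite /dotv; under eq_bigr => i _ do rewrite !mxE big_distrl.
under [RHS]eq_bigr => k _ do rewrite !mxE big_distrr.
rewrite exchange_big /=; apply: eq_bigr => k _; apply: eq_bigr => i _.
by rewrite mxE mulrCA mulrA.
Qed.

Section Pseudoinverse.
Context {R : realType}.

Lemma trmx_mul_self_eq0 {p q} (A : 'M[R]_(p, q)) : A^T *m A = 0 -> A = 0.
Proof.
move=> /matrixP AA0; apply/matrixP => i j.
have := AA0 j j; rewrite !mxE => sum0.
have /dotv_eq0/matrixP/(_ i 0) : dotv (col j A) (col j A) = 0.
  by rewrite -[RHS]sum0; apply: eq_bigr => k _; rewrite !mxE.
by rewrite !mxE.
Qed.

Lemma row_free_gram_unit {r q} (G : 'M[R]_(r, q)) : row_free G -> G *m G^T \in unitmx.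
Proof.
move=> freeG; rewrite -row_free_unit; apply: inj_row_free => v vGG0.
have : (v *m G)^T^T *m (v *m G)^T = 0.
  by rewrite trmxK trmx_mul !mulmxA -(mulmxA v) vGG0 mul0mx.
move/trmx_mul_self_eq0/(congr1 trmx); rewrite trmxK trmx0 => vG0.
by apply: (row_free_inj freeG); rewrite vG0 mul0mx.
Qed.

(* The pseudoinverse of a full-rank factorisation F G is G^+ F^+, with
   G^+ = G^T (G G^T)^-1 and F^+ = (F^T F)^-1 F^T. *)
Lemma is_pinv_factor p r q (F : 'M[R]_(p, r)) (G : 'M[R]_(r, q)) :
  G *m G^T \in unitmx -> F^T *m F \in unitmx ->
  is_pinv (F *m G) (G^T *m invmx (G *m G^T) *m invmx (F^T *m F) *m F^T).
Proof.
move=> uG uF.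
set IG := invmx (G *m G^T); set IF := invmx (F^T *m F).
have symIG : IG^T = IG by rewrite /IG trmx_inv trmx_mul trmxK.
have symIF : IF^T = IF by rewrite /IF trmx_inv trmx_mul trmxK.
have AX : F *m G *m (G^T *m IG *m IF *m F^T) = F *m IF *m F^T.
  by rewrite !mulmxA -(mulmxA F G) -(mulmxA F) mulmxV // mulmx1.
have XA : G^T *m IG *m IF *m F^T *m (F *m G) = G^T *m IG *m G.
  by rewrite !mulmxA -(mulmxA _ F^T F) -(mulmxA _ IF) mulVmx // mulmx1.
split.
- by rewrite AX !mulmxA -(mulmxA _ F^T F) -(mulmxA F IF) mulVmx // mulmx1.
- by rewrite XA !mulmxA -(mulmxA _ G G^T) -(mulmxA _ (G *m G^T) IG) mulmxV // mulmx1.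
- by rewrite AX !trmx_mul trmxK symIF mulmxA.
- by rewrite XA !trmx_mul trmxK symIG mulmxA.
Qed.

Lemma is_pinv_pinv {p q} (A : 'M[R]_(p, q)) : is_pinv A (pinv A).
Proof.
apply: epsilon_spec; rewrite -{1}(mulmx_base A).
eexists; apply: is_pinv_factor.
  exact: row_free_gram_unit (row_base_free A).
rewrite -[X in _ *m X]trmxK; apply: row_free_gram_unit.
by rewrite /row_free mxrank_tr; apply: col_base_full.
Qed.

Lemma gram_pinv_mulK {p q} (W : 'M[R]_(p, q)) :
  W^T *m pinv (W *m W^T) *m (W *m W^T) = W^T.
Proof.
set M := W *m W^T; have [MYM _ _ YMsym] := is_pinv_pinv M.
set E := pinv M *m M - 1%:M.
have ME : M *m E = 0 by rewrite /E mulmxBr mulmxA MYM mulmx1 subrr.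
have symE : E^T = E by rewrite /E linearB /= YMsym trmx1.
have : (W^T *m E)^T *m (W^T *m E) = 0.
  by rewrite trmx_mul symE trmxK -!mulmxA (mulmxA W) -/M ME mulmx0.
move/trmx_mul_self_eq0/eqP; rewrite /E mulmxBr mulmx1 mulmxA subr_eq0.
by move/eqP.
Qed.

End Pseudoinverse.

Section Laplacian.
Context {R : realType} {n m : nat} {src dst : 'I_m -> 'I_n}.
Local Notation C := (incidence R src dst).
Local Notation V := (PTDF R src dst).
Local Notation ones := (const_mx 1 : 'cV[R]_n).

Lemma incidence_mulE p (x : 'M[R]_(n, p)) k j :
  (C *m x) k j = x (src k) j - x (dst k) j.
Proof.
rewrite mxE; under eq_bigr => v _ do rewrite mxE mulrBl !mulr_natl !mulrb.
by rewrite sumrB -!big_mkcond !big_pred1_eq.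
Qed.

Lemma trmx_incidenceE j k : C^T j k = (j == src k)%:R - (j == dst k)%:R.
Proof. by rewrite !mxE. Qed.

Lemma incidence_mul_ones : C *m ones = 0.
Proof. by apply/matrixP => k j; rewrite incidence_mulE !mxE subrr. Qed.

Lemma PTDF_mul_ones : V *m ones = 0.
Proof.
have [_ XLX LXsym _] := is_pinv_pinv (C^T *m C).
rewrite /PTDF /= -mulmxA -XLX -(mulmxA _ (C^T *m C)) -LXsym !trmx_mul trmxK.
by rewrite -!mulmxA incidence_mul_ones !mulmx0.
Qed.

Hypothesis connected : forall u v, connect (adj src dst) u v.

Lemma laplacian_ker_const {p} (U : 'M[R]_(n, p)) :
  C^T *m C *m U = 0 -> forall i i' j, U i j = U i' j.
Proof.
move=> LU0.
have CU0 : C *m U = 0.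
  by apply: trmx_mul_self_eq0; rewrite trmx_mul -mulmxA (mulmxA C^T) LU0 mulmx0.
have edgeU k j : U (src k) j = U (dst k) j.
  by apply/eqP; rewrite -subr_eq0 -incidence_mulE CU0 mxE.
move=> i i' j; have /connectP[q walk ->] := connected i i'.
elim: q i walk => //= w q IHq i /andP[/existsP[k edge_k] walk].
rewrite -(IHq _ walk).
by case/orP: edge_k => /andP[/eqP <- /eqP <-].
Qed.

Lemma trmx_incidence_PTDF : C^T *m V = 1%:M - n%:R^-1 *: const_mx 1.
Proof.
have [LXL _ LXsym _] := is_pinv_pinv (C^T *m C).
have Lsym : (C^T *m C)^T = C^T *m C by rewrite trmx_mul trmxK.
set E := 1%:M - C^T *m V.
have LXE : C^T *m V = 1%:M - E by rewrite opprB addrC subrK.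
have Esym : E^T = E by rewrite /E /PTDF /= mulmxA linearB /= LXsym trmx1.
have LE0 : C^T *m C *m E = 0.
  rewrite -Lsym -Esym -trmx_mul /E /PTDF /= mulmxA.
  by rewrite mulmxBl mul1mx LXL subrr trmx0.
have Eones : E *m ones = ones.
  by rewrite /E mulmxBl mul1mx -mulmxA PTDF_mul_ones mulmx0 subr0.
clearbody E.
(* E is symmetric and killed by the Laplacian of a connected graph. *)
have Econst i j i' j' : E i j = E i' j'.
  have Ecol := laplacian_ker_const _ LE0.
  have /matrixP Esym' := Esym.
  by rewrite (Ecol i i' j) -[LHS]Esym' mxE (Ecol j j' i') -[LHS]Esym' mxE.
rewrite LXE; congr (_ - _); apply/matrixP => i j.
have /matrixP/(_ i 0) := Eones; rewrite !mxE => sumE.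
have n_pos : 0 < n%:R :> R by rewrite ltr0n; apply: leq_ltn_trans (ltn_ord i).
rewrite mulr1; apply: (mulfI (lt0r_neq0 n_pos)); rewrite mulfV ?lt0r_neq0 //.
rewrite -[RHS]sumE (eq_bigr (fun=> E i j)) ?sumr_const ?card_ord ?mulr_natl //.
by move=> k _; rewrite mxE mulr1 (Econst i k i j).
Qed.

Lemma PTDF_mean0K (x : 'cV[R]_n) : \sum_i x i 0 = 0 -> C^T *m (V *m x) = x.
Proof.
move=> sum0; rewrite mulmxA trmx_incidence_PTDF mulmxBl mul1mx.
apply/eqP; rewrite subr_eq addrC -subr_eq subrr eq_sym; apply/eqP/matrixP => i j.
rewrite ord1 !mxE -[RHS](mulr0 n%:R^-1) -[in RHS]sum0 mulr_sumr.
by apply: eq_bigr => k _; rewrite !mxE mulr1.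
Qed.

Lemma PTDF_delta_in_le0 a k : dst k = a -> (V *m (delta_mx a 0 : 'cV[R]_n)) k 0 <= 0.
Proof.
move=> dst_k; set p := pinv (C^T *m C) *m (delta_mx a 0 : 'cV[R]_n).
have Cp : C *m p = V *m delta_mx a 0 by rewrite /p mulmxA.
have Lp j : (C^T *m (C *m p)) j 0 = (j == a)%:R - n%:R^-1.
  by rewrite Cp mulmxA trmx_incidence_PTDF -colE !mxE mulr1.
(* Off a, L p = -1/n < 0, which is impossible at a maximum of p. *)
have [j _ pmax] := @arg_maxP _ _ _ a xpredT (fun j => p j 0) isT.
suff ja : j = a by rewrite -Cp incidence_mulE dst_k -ja subr_le0; apply: pmax.
apply/eqP; apply: contraT => ja.
have : 0 <= (C^T *m (C *m p)) j 0.
  rewrite mxE sumr_ge0 // => e _; rewrite trmx_incidenceE incidence_mulE.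
  move: (pmax (src e) isT) (pmax (dst e) isT).
  by case: eqVneq => [<-|_]; case: eqVneq => [<-|_]; rewrite ?eqxx /=; lra.
by rewrite Lp (negbTE ja) sub0r oppr_ge0 invr_le0 leNgt ltr0n (leq_ltn_trans _ (ltn_ord a)).
Qed.

End Laplacian.

Definition mean {R : realType} {n} (x : 'cV[R]_n) : R := n%:R^-1 * \sum_i x i 0.

Lemma sum_mean_ones {R : realType} {n} (x : 'cV[R]_n) :
  (0 < n)%N -> \sum_i (mean x *: const_mx 1 : 'cV[R]_n) i 0 = \sum_i x i 0.
Proof.
move=> n_pos; under eq_bigr => i _ do rewrite !mxE mulr1.
by rewrite sumr_const card_ord -mulr_natr /mean mulrAC mulVf ?mul1r // pnatr_eq0 -lt0n.
Qed.

Lemma exists_small_step {R : realType} {I : finType} (a b : I -> R) :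
  (forall i, 0 < a i) -> exists2 t, 0 < t <= 1 & forall i, t * b i <= a i.
Proof.
move=> a_pos; set S := \sum_i `|b i| / a i.
have S_ge0 : 0 <= S by rewrite sumr_ge0 // => i _; rewrite divr_ge0 ?normr_ge0 ?ltW.
exists (1 + S)^-1; first by rewrite invr_gt0 invf_le1 ?ltr_wpDr // lerDl.
move=> i; rewrite mulrC ler_pdivrMr ?ltr_wpDr //.
have bS : `|b i| <= a i * S.
  rewrite mulrC -ler_pdivrMr // /S (bigD1 i) //= lerDl.
  by rewrite sumr_ge0 // => j _; rewrite divr_ge0 ?normr_ge0 ?ltW.
have := ler_norm (b i); have := a_pos i; rewrite mulrDr mulr1; lra.
Qed.

Section RowSelection.
Context {R : realType} {n m : nat}.
Variables (V : 'M[R]_(m, n)) (I : {set 'I_m}).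

Lemma rows_of_mulE p (x : 'M[R]_(n, p)) j c :
  (rows_of V I *m x) j c = (V *m x) (enum_val j) c.
Proof. by rewrite !mxE /rows_of; apply: eq_bigr => l _; rewrite !mxE. Qed.

Lemma rows_of_mul_eq0 (x : 'cV[R]_n) :
  rows_of V I *m x = 0 -> forall k, k \in I -> (V *m x) k 0 = 0.
Proof.
move=> /matrixP Vx0 k kI.
by have := Vx0 (enum_rank_in kI k) 0; rewrite rows_of_mulE enum_rankK_in // => ->; rewrite mxE.
Qed.

End RowSelection.

Section Feasibility.
Context {R : realType} {n m : nat}.
Variables (lam : R) (V : 'M[R]_(m, n)) (d : 'cV[R]_n).
Hypothesis Vd_ge0 : forall k, 0 <= (V *m d) k 0.
Local Notation ones := (const_mx 1 : 'cV[R]_n).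
Local Notation feasible := (feasible lam V d).
Local Notation I1 g := (I1set lam V d g).
Local Notation I2 g := (I2set lam V d g).
Implicit Types (g h r : 'cV[R]_n).

Lemma feasibleP g : feasible g <->
  [/\ forall i, 0 <= g i 0, \sum_i g i 0 = \sum_i d i 0 &
      forall k, (1 - lam) * (V *m d) k 0 <= (V *m g) k 0 <= (1 + lam) * (V *m d) k 0].
Proof.
have VdgE k : (V *m (d - g)) k 0 = (V *m d) k 0 - (V *m g) k 0 by rewrite mulmxBr !mxE.
split=> -[g_ge0 sum_g bounds]; split=> // k; have := bounds k;
  rewrite VdgE ger0_norm //; [case | move=> /andP[]]; lra.
Qed.

Definition shrink_to_mean : 'cV[R]_n := (1 - lam) *: d + (lam * mean d) *: ones.

Lemma shrink_to_meanE i : shrink_to_mean i 0 = (1 - lam) * d i 0 + lam * mean d.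
Proof. by rewrite !mxE mulr1. Qed.

Lemma sum_shrink_to_mean : (0 < n)%N -> \sum_i shrink_to_mean i 0 = \sum_i d i 0.
Proof.
move=> n_pos; under eq_bigr => i _ do rewrite shrink_to_meanE.
rewrite big_split /= -mulr_sumr sumr_const card_ord -mulr_natr /mean.
by field; rewrite pnatr_eq0 -lt0n.
Qed.

Lemma mul_shrink_to_mean : V *m ones = 0 -> V *m shrink_to_mean = (1 - lam) *: (V *m d).
Proof. by move=> Vones; rewrite mulmxDr -!scalemxAr Vones scaler0 addr0. Qed.

Lemma shrink_to_mean_feasible :
  (0 < n)%N -> V *m ones = 0 -> 0 <= lam <= 1 -> (forall i, 0 <= d i 0) ->
  feasible shrink_to_mean.
Proof.
move=> n_pos Vones /andP[lam_ge0 lam_le1] d_ge0.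
have mean_ge0 : 0 <= mean d by rewrite mulr_ge0 ?sumr_ge0 // invr_ge0.
apply/feasibleP; split=> [i|| k].
- by rewrite shrink_to_meanE addr_ge0 // mulr_ge0 // subr_ge0.
- exact: sum_shrink_to_mean.
- rewrite mul_shrink_to_mean // [X in _ <= X <= _]mxE lexx /=.
  by apply: ler_wpM2r => //; lra.
Qed.

Lemma gstar_min g h : is_gstar lam V d g -> feasible h -> dotv g g <= dotv h h.
Proof.
by move=> [_ g_min] /g_min; rewrite !dotv_sqr ler_pM2l // invr_gt0.
Qed.

Lemma feasible_inactive_step g r :
  feasible g -> (forall i, 0 < g i 0) -> \sum_i r i 0 = 0 ->
  (forall k, k \in I1 g :|: I2 g -> (V *m r) k 0 = 0) ->
  exists2 t, 0 < t <= 1 & feasible (g - t *: r).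
Proof.
move=> /feasibleP[_ sum_g bounds] g_pos sum_r active.
pose slack k := Num.min ((V *m g) k 0 - (1 - lam) * (V *m d) k 0)
                        ((1 + lam) * (V *m d) k 0 - (V *m g) k 0).
pose room k := if k \in I1 g :|: I2 g then 1 else slack k.
have room_pos k : 0 < room k.
  rewrite /room; case: ifPn; rewrite ?ltr01 // !inE negb_or => /andP[notI1 notI2].
  have /andP[lo hi] := bounds k.
  by rewrite lt_min !subr_gt0 !lt_neqAle lo hi eq_sym notI1 notI2.
have [t1 /andP[t1_gt0 _] small_r] := exists_small_step _ (fun i => `|r i 0|) g_pos.
have [t2 /andP[t2_gt0 t2_le1] small_Vr] :=
  exists_small_step _ (fun k => `|(V *m r) k 0|) room_pos.
exists (Num.min t1 t2); first by rewrite lt_min t1_gt0 t2_gt0 ge_min t2_le1 orbT.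
set t := Num.min t1 t2.
have t_ge0 : 0 <= t by rewrite le_min !ltW.
have t_le_t1 : t <= t1 by rewrite ge_min lexx.
have t_le_t2 : t <= t2 by rewrite ge_min lexx orbT.
apply/feasibleP; split=> [i|| k].
- have := ler_wpM2r (normr_ge0 (r i 0)) t_le_t1.
  have := ler_wpM2l t_ge0 (ler_norm (r i 0)); have := small_r i.
  by rewrite !mxE; lra.
- under eq_bigr => i _ do rewrite !mxE.
  by rewrite sumrB -mulr_sumr sum_r mulr0 subr0.
- have -> : (V *m (g - t *: r)) k 0 = (V *m g) k 0 - t * (V *m r) k 0.
    by rewrite mulmxBr -scalemxAr !mxE.
  case: (boolP (k \in I1 g :|: I2 g)) => [k_active | k_inactive].
    by rewrite active // mulr0 subr0.
  have : `|t * (V *m r) k 0| <= slack k.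
    rewrite normrM ger0_norm //.
    apply: le_trans (ler_wpM2r (normr_ge0 _) t_le_t2) _.
    by have := small_Vr k; rewrite /room (negbTE k_inactive).
  have slack_lo : slack k <= (V *m g) k 0 - (1 - lam) * (V *m d) k 0.
    by rewrite ge_min lexx.
  have slack_hi : slack k <= (1 + lam) * (V *m d) k 0 - (V *m g) k 0.
    by rewrite ge_min lexx orbT.
  rewrite ler_norml => /andP[? ?]; apply/andP; split; lra.
Qed.

Lemma gstar_interior_descent g r :
  is_gstar lam V d g -> (forall i, 0 < g i 0) -> \sum_i r i 0 = 0 ->
  (forall k, k \in I1 g :|: I2 g -> (V *m r) k 0 = 0) ->
  2 * dotv g r <= dotv r r.
Proof.
move=> gstar g_pos sum_r active; have [g_feas _] := gstar.
have [t /andP[t_gt0 t_le1] step_feas] :=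
  feasible_inactive_step g r g_feas g_pos sum_r active.
have := gstar_min g _ gstar step_feas.
rewrite !(dotvBl, dotvBr, dotvZl, dotvZr) (dotvC r g) => descent.
have tQ_le := ler_wpM2l (ltW t_gt0) (ler_piMl (dotv_ge0 r) t_le1).
rewrite -(ler_pM2l t_gt0); lra.
Qed.

Lemma gstar_interior_Amat g :
  (0 < n)%N -> V *m ones = 0 -> is_gstar lam V d g -> (forall i, 0 < g i 0) ->
  g = Amat lam V (I1 g) (I2 g) *m d.
Proof.
move=> n_pos Vones gstar g_pos; have [/feasibleP[_ sum_g _] _] := gstar.
set W := col_mx (rows_of V (I1 g)) (rows_of V (I2 g)).
set Y := pinv (W *m W^T).
set J := mean d *: ones.
have AJ : ((n%:R)^-1 *: const_mx 1 : 'M[R]_n) *m d = J.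
  apply/matrixP => i j; rewrite ord1 -scalemxAl !mxE mulr1; congr (_ * _).
  by apply: eq_bigr => k _; rewrite mxE mul1r.
have Wones : W *m ones = 0.
  by rewrite mul_col_mx; apply/eqP; rewrite col_mx_eq0; apply/andP; split;
    apply/eqP/matrixP => j c; rewrite rows_of_mulE Vones !mxE.
have Wg : col_mx ((1 - lam) *: rows_of V (I1 g)) ((1 + lam) *: rows_of V (I2 g)) *m d
          = W *m g.
  rewrite !mul_col_mx -!scalemxAl; congr col_mx; apply/matrixP => j c;
    by rewrite ord1 mxE !rows_of_mulE; have := enum_valP j; rewrite inE => /eqP ->.
have WWYW : W *m W^T *m Y^T *m W = W.
  by have := congr1 trmx (gram_pinv_mulK W); rewrite !trmx_mul !trmxK mulmxA.
set u := Y^T *m W *m (g - J).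
(* r is the component of g - J orthogonal to the rows of W. *)
set r := g - J - W^T *m u.
have Wr : W *m r = 0.
  by rewrite /r /u mulmxBr !mulmxA WWYW subrr.
have sum_r : \sum_i r i 0 = 0.
  rewrite -dotv_onesl /r !dotvBr [dotv _ (W^T *m u)]dotvC dotv_trmx_mull Wones dotv0r.
  by rewrite !dotv_onesl sum_g sum_mean_ones // subrr subr0.
have active k : k \in I1 g :|: I2 g -> (V *m r) k 0 = 0.
  move: Wr; rewrite mul_col_mx => /eqP; rewrite col_mx_eq0 => /andP[/eqP W1 /eqP W2].
  by rewrite inE => /orP[]; [move: W1 | move: W2] => /rows_of_mul_eq0; apply.
have gr : dotv g r = dotv r r.
  have -> : g = J + W^T *m u + r by apply/matrixP => i j; rewrite /r !mxE; ring.
  by rewrite !dotvDl dotvZl dotv_onesl sum_r dotv_trmx_mull Wr dotv0r mulr0 !add0r.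
have r0 : r = 0.
  apply: dotv_eq0; apply/eqP; rewrite eq_le dotv_ge0 andbT.
  have := gstar_interior_descent g r gstar g_pos sum_r active.
  rewrite gr; have := dotv_ge0 r; lra.
have gJ : g - J = W^T *m u by apply/eqP; rewrite -subr_eq0 -/r r0.
have WgWu : W *m g = W *m (W^T *m u).
  by rewrite -gJ mulmxBr -scalemxAr Wones scaler0 subr0.
rewrite /Amat /= mulmxDl AJ -mulmxA -/W -/Y Wg WgWu.
rewrite (mulmxA W) mulmxA gram_pinv_mulK -gJ.
by rewrite addrC subrK.
Qed.

End Feasibility.

Section Perturbation.
Context {R : realType} {n m : nat} {src dst : 'I_m -> 'I_n} {lam : R}.
Hypothesis connected : forall u v, connect (adj src dst) u v.
Hypotheses (lam_gt0 : 0 < lam) (lam_lt1 : lam < 1).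
Local Notation V := (PTDF R src dst).

Lemma feasible_node_gap (d g : 'cV[R]_n) a :
  (forall k, 0 <= (V *m d) k 0) -> feasible lam V d g ->
  shrink_to_mean lam d a 0 - g a 0 <= 2 * lam * \sum_(k | dst k == a) (V *m d) k 0.
Proof.
move=> Vd_ge0 g_feas; have /(feasibleP lam V d Vd_ge0)[_ sum_g bounds] := g_feas.
have n_pos : (0 < n)%N by apply: leq_ltn_trans (ltn_ord a).
set h := shrink_to_mean lam d.
have sum_hg : \sum_i (h - g) i 0 = 0.
  under eq_bigr => i _ do rewrite [(h - g) i 0]mxE [(- g) i 0]mxE.
  by rewrite sumrB sum_shrink_to_mean // sum_g subrr.
have -> : h a 0 - g a 0 = (h - g) a 0 by rewrite [(h - g) a 0]mxE [(- g) a 0]mxE.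
rewrite -(PTDF_mean0K connected _ sum_hg) mxE.
rewrite mulr_sumr [X in _ <= X]big_mkcond /=; apply: ler_sum => k _.
rewrite trmx_incidenceE mulmxBr mul_shrink_to_mean ?PTDF_mul_ones //.
have -> : ((1 - lam) *: (V *m d) - V *m g) k 0 = (1 - lam) * (V *m d) k 0 - (V *m g) k 0.
  by rewrite !mxE.
have := bounds k; have := mulr_ge0 (ltW lam_gt0) (Vd_ge0 k).
by rewrite [dst k == a]eq_sym; case: (a == src k); case: (a == dst k); rewrite /=; lra.
Qed.

Variables (gam : 'cV[R]_n) (n0 : 'I_n) (eps : R).
Hypotheses (n0_first : val n0 = 0%N) (gamG : in_Gamma gam).
Hypotheses (eps_ge0 : 0 <= eps) (eps_le1 : eps <= 1).
Local Notation d := (e1 R n + eps *: gam).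
Local Notation h := (shrink_to_mean lam d).
Local Notation K := (4 * (\sum_k `|(V *m gam) k 0| + 1)).

Lemma e1_delta : e1 R n = delta_mx n0 0.
Proof. by apply/matrixP => i j; rewrite ord1 !mxE -n0_first andbT. Qed.

Lemma perturbedE i : d i 0 = (i == n0)%:R + eps * gam i 0.
Proof. by rewrite e1_delta !mxE andbT. Qed.

Lemma perturbed_ge0 i : 0 <= d i 0.
Proof. by have [_ gam_ge0 _] := gamG; rewrite perturbedE addr_ge0 ?mulr_ge0. Qed.

Lemma sum_perturbed : \sum_i d i 0 = 1 + eps.
Proof.
have [_ _ sum_gam] := gamG.
under eq_bigr => i _ do rewrite perturbedE.
rewrite big_split /= -mulr_sumr sum_gam mulr1 (bigD1 n0) //= eqxx big1 ?addr0 //.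
by move=> i /negbTE ->.
Qed.

Lemma inflow_le :
  \sum_(k | dst k == n0) (V *m d) k 0 <= eps * \sum_k `|(V *m gam) k 0|.
Proof.
rewrite mulr_sumr [X in _ <= X](bigID (fun k => dst k == n0)) /= -[X in X <= _]addr0.
apply: lerD; last by rewrite sumr_ge0 // => k _; rewrite mulr_ge0.
apply: ler_sum => k /eqP dst_k.
rewrite e1_delta mulmxDr -scalemxAr [X in X <= _]mxE [X in _ + X <= _]mxE.
have := PTDF_delta_in_le0 (R := R) connected n0 k dst_k.
have := ler_wpM2l eps_ge0 (ler_norm ((V *m gam) k 0)); lra.
Qed.

Lemma gstar_dist_shrink_to_mean g : (forall k, 0 <= (V *m d) k 0) -> is_gstar lam V d g ->
  dotv (g - h) (g - h) <= eps * K.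
Proof.
move=> Vd_ge0 gstar; have [g_feas _] := gstar.
have n_pos : (0 < n)%N by apply: leq_ltn_trans (ltn_ord n0).
have [_ gam_ge0 sum_gam] := gamG.
have h_feas : feasible lam V d h.
  apply: shrink_to_mean_feasible => //; first exact: PTDF_mul_ones.
    by rewrite !ltW.
  exact: perturbed_ge0.
have /(feasibleP lam V d Vd_ge0)[h_ge0 sum_h _] := h_feas.
have /(feasibleP lam V d Vd_ge0)[g_ge0 sum_g _] := g_feas.
set X := dotv (h - g) d.
have dist_le : dotv (g - h) (g - h) <= 2 * (1 - lam) * X.
  have hE : dotv (h - g) h = (1 - lam) * X.
    rewrite dotvDr !dotvZr [dotv _ (const_mx 1)]dotvC dotvBr !dotv_onesl.
    by rewrite sum_h sum_g subrr mulr0 addr0.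
  have := gstar_min lam V d g h gstar h_feas.
  rewrite -mulrA -hE !(dotvBl, dotvBr) (dotvC h g); lra.
have X_split : X = (h - g) n0 0 + eps * dotv (h - g) gam.
  by rewrite /X e1_delta dotvDr dotv_deltar dotvZr.
have gap : (h - g) n0 0 <= 2 * (eps * \sum_k `|(V *m gam) k 0|).
  rewrite [(h - g) n0 0]mxE [(- g) n0 0]mxE.
  have B_ge0 : 0 <= \sum_(k | dst k == n0) (V *m d) k 0 by rewrite sumr_ge0.
  have := feasible_node_gap _ _ n0 Vd_ge0 g_feas.
  have := ler_piMl B_ge0 (ltW lam_lt1); have := inflow_le.
  lra.
have gam_part : dotv (h - g) gam <= 2.
  have gam_le1 i : gam i 0 <= 1.
    by rewrite -sum_gam (bigD1 i) //= lerDl sumr_ge0.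
  have hgam : dotv h gam <= \sum_i h i 0.
    by apply: ler_sum => i _; rewrite ler_piMr.
  have ggam : 0 <= dotv g gam by rewrite sumr_ge0 // => i _; rewrite mulr_ge0.
  rewrite dotvBl; move: hgam; rewrite sum_h sum_perturbed; have := eps_le1; lra.
have X_ge0 : 0 <= X.
  have := le_trans (dotv_ge0 _) dist_le.
  by rewrite -mulrA pmulr_rge0 ?pmulr_rge0 // subr_gt0.
have := mulr_ge0 (ltW lam_gt0) X_ge0; have := ler_wpM2l eps_ge0 gam_part; lra.
Qed.

Lemma gstar_perturbed_pos g : (forall k, 0 <= (V *m d) k 0) -> is_gstar lam V d g ->
  eps * K < (lam / n%:R) ^+ 2 -> forall i, 0 < g i 0.
Proof.
move=> Vd_ge0 gstar small i; rewrite ltNge; apply/negP => gi_le0.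
have n_gt0 : 0 < n%:R :> R by rewrite ltr0n (leq_ltn_trans _ (ltn_ord n0)).
set a := lam / n%:R.
have a_gt0 : 0 < a by rewrite divr_gt0.
have a_le_h : a <= h i 0.
  have mean_ge : n%:R^-1 <= mean d.
    by rewrite /mean sum_perturbed; apply: ler_peMr; rewrite ?lerDl ?invr_ge0 ?(ltW n_gt0).
  have : 0 <= (1 - lam) * d i 0 by rewrite mulr_ge0 ?subr_ge0 ?perturbed_ge0 // ltW.
  have := ler_wpM2l (ltW lam_gt0) mean_ge.
  rewrite shrink_to_meanE /a; lra.
have a_le_gap : a <= h i 0 - g i 0 by lra.
have := ler_pM (ltW a_gt0) (ltW a_gt0) a_le_gap a_le_gap.
have := sqr_le_dotv (g - h) i; have := gstar_dist_shrink_to_mean g Vd_ge0 gstar.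
move: small; rewrite -/a [(g - h) i 0]mxE [(- h) i 0]mxE; lra.
Qed.

End Perturbation.

Theorem mainTheorem4 (R : realType) (n m : nat) (src dst : 'I_m -> 'I_n) (lam : R) :
  simple_connected_oriented src dst -> 0 < lam < 1 ->
  forall gam : 'cV[R]_n, in_Gamma gam ->
  exists2 eps0 : R, 0 < eps0 &
    forall eps : R, 0 <= eps <= eps0 ->
    let V := PTDF R src dst in
    let d := e1 R n + eps *: gam in
    (forall k, 0 <= (V *m d) k 0) ->
    forall g : 'cV[R]_n, is_gstar lam V d g ->
    g = Amat lam V (I1set lam V d g) (I2set lam V d g) *m d.
Proof.
move=> [_ _ connected] /andP[lam_gt0 lam_lt1] gam gamG.
have [n0|n_pos] := posnP n.
  by exists 1 => // eps _ V d _ g _; apply/matrixP => -[i i_lt]; exfalso; rewrite n0 in i_lt.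
set K := 4 * (\sum_k `|(PTDF R src dst *m gam) k 0| + 1).
set a := lam / n%:R.
have K_ge0 : 0 <= K by rewrite mulr_ge0 // addr_ge0 // sumr_ge0.
have a2_gt0 : 0 < a ^+ 2 by rewrite exprn_gt0 // divr_gt0 // ltr0n.
exists (Num.min 1 (a ^+ 2 / (K + 1))).
  by rewrite lt_min ltr01 divr_gt0 // ltr_wpDl.
move=> eps /andP[eps_ge0]; rewrite le_min => /andP[eps_le1 eps_small].
move=> V d Vd_ge0 g gstar.
apply: gstar_interior_Amat => //; first exact: PTDF_mul_ones.
apply: (gstar_perturbed_pos connected lam_gt0 lam_lt1 gam (Ordinal n_pos) eps) => //.
apply: le_lt_trans (ler_wpM2r K_ge0 eps_small) _.
by rewrite mulrAC ltr_pdivrMr ?ltr_wpDl // -/a mulrDr mulr1 ltrDl.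
Qed.
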